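(* In the setting of the $i$-th horizontal composition (with $\psi$ dinatural in its $i$-th variable), if $\psi$ is also dinatural in its $j$-th variable for some $j\ne i$, then $\phi\ast_i\psi$ is dinatural in its variable $B_j$.
   Context: Notation: $k$ also denotes $\{1,\dots,k\}$; $\mathbb C^\alpha=\mathbb C^{\alpha_1}\times\cdots$ with $\mathbb C^+=\mathbb C$, $\mathbb C^-=\mathbb C^{op}$; for $\mathbf A=(A_1,\dots,A_n)$, $\sigma\colon k\to n$, $\mathbf A\sigma=(A_{\sigma1},\dots,A_{\sigma k})$; a morphism in a contravariant argument is read in $\mathbb C^{op}$. A transformation $\phi\colon F\to G$ ($F\colon\mathbb C^\alpha\to\mathbb C$, $G\colon\mathbb C^\beta\to\mathbb C$) of type $|\alpha|\xrightarrow{\sigma}n\xleftarrow{\tau}|\beta|$ is a family $\phi_{\mathbf A}\colon F(\mathbf A\sigma)\to G(\mathbf A\tau)$, $\mathbf A\in\mathrm{Ob}(\mathbb C)^n$. $\mathbf A[X,Y/i]\sigma$ is the tuple whose $j$-th entry is $X$ if $\sigma j=i,\alpha_j=-$, $Y$ if $\sigma j=i,\alpha_j=+$, $A_{\sigma j}$ (or $1_{A_{\sigma j}}$ for morphisms) otherwise; $\mathbf A[X/i]=\mathbf A[X,X/i]$. $\phi$ is dinatural in its $i$-th variable if for all $A_j$ ($j\ne i$) and $f\colon A\to B$: $G(\mathbf A[A,f/i]\tau)\circ\phi_{\mathbf A[A/i]}\circ F(\mathbf A[f,A/i]\sigma)=G(\mathbf A[f,B/i]\tau)\circ\phi_{\mathbf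 A[B/i]}\circ F(\mathbf A[B,f/i]\sigma)$. Horizontal composition: let $F\colon\mathbb C^\alpha\to\mathbb C$, $G\colon\mathbb C^\beta\to\mathbb C$, $H\colon\mathbb C^\gamma\to\mathbb C$, $K\colon\mathbb C^\delta\to\mathbb C$, $\phi\colon F\to G$ of type $|\alpha|\xrightarrow{\sigma}n\xleftarrow{\tau}|\beta|$ with variables $\mathbf A=(A_1,\dots,A_n)$, and $\psi\colon H\to K$ of type $|\gamma|\xrightarrow{\eta}m\xleftarrow{\theta}|\delta|$ with variables $\mathbf B=(B_1,\dots,B_m)$, dinatural in its $i$-th variable. The $i$-th horizontal composite $\phi\ast_i\psi$ is the transformation with variables $\mathbf B[\mathbf A/i]=(B_1,\dots,B_{i-1},A_1,\dots,A_n,B_{i+1},\dots,B_m)$ (so $A_k$ is its $(i-1+k)$-th variable). Its domain functor is obtained from $H$ by substituting, into each argument position $u$ with $\eta u=i$, the functor $F$ if $\gamma_u=+$ and $G^{op}$ if $\gamma_u=-$ (other positions unchanged); its codomain functor is obtained from $K$ by substituting, into each position $v$ with $\theta v=i$, $G$ if $\delta_v=+$ and $F^{op}$ if $\delta_v=-$. In its type, an argument coming from the $j$-th argument of a copy of $F$ is assigned variable $A_{\sigma j}$, one coming from the $j$-th argument of a copy of $G$ variable $A_{\tau j}$, and an unchanged position $u$ of $H$ (resp. $v$ of $K$) variable $B_{\eta u}$ (resp. $B_{\theta v}$). Its component at $\mathbf B[\mathbf A/i]$ is the morphism $H(\mathbf B[G(\mathbf A\tau),F(\mathbf A\sigma)/i]\eta)\to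 K(\mathbf B[F(\mathbf A\sigma),G(\mathbf A\tau)/i]\theta)$ given by $K(\mathbf B[F(\mathbf A\sigma),\phi_{\mathbf A}/i]\theta)\circ\psi_{\mathbf B[F(\mathbf A\sigma)/i]}\circ H(\mathbf B[\phi_{\mathbf A},F(\mathbf A\sigma)/i]\eta)$, equal to $K(\mathbf B[\phi_{\mathbf A},G(\mathbf A\tau)/i]\theta)\circ\psi_{\mathbf B[G(\mathbf A\tau)/i]}\circ H(\mathbf B[G(\mathbf A\tau),\phi_{\mathbf A}/i]\eta)$ by dinaturality of $\psi$. Dinaturality of $\phi\ast_i\psi$ in a variable is in the sense above applied to this transformation. *)

From mathcomp Require Import all_boot.
Unset Printing Implicit Defensive.

(* Categories, presented single-sorted: objects, arrows, domain/codomain,   *)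
(* identities and composition ([comp g f] = g o f; it is only meaningful    *)
(* when [cod f = dom g]).  Hom(a,b) = { f | dom f = a /\ cod f = b }.       *)
Record Cat := {
  Ob : Type;
  Arr : Type;
  dom : Arr -> Ob;
  cod : Arr -> Ob;
  idc : Ob -> Arr;
  comp : Arr -> Arr -> Arr;
  dom_id : forall a, dom (idc a) = a;
  cod_id : forall a, cod (idc a) = a;
  dom_comp : forall f g, cod f = dom g -> dom (comp g f) = dom f;
  cod_comp : forall f g, cod f = dom g -> cod (comp g f) = cod g;
  comp_id_l : forall f, comp (idc (cod f)) f = f;
  comp_id_r : forall f, comp f (idc (dom f)) = f;
  comp_assoc : forall f g h, cod f = dom g -> cod g = dom h ->
     comp h (comp g f) = comp (comp h g) f }.
Arguments dom {c} _.
Arguments cod {c} _.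
Arguments idc {c} _.
Arguments comp {c} _ _.

(* Mixed-variance functors  F : C^a -> C,  argument positions indexed by P, *)
(* a p = true  means position p is covariant (C^+ = C),                      *)
(* a p = false means position p is contravariant (C^- = C^op).               *)
(* A morphism of C^a is a family of arrows f p; at a contravariant position *)
(* the arrow f p of C is read in C^op (so it goes from cod (f p) to dom).   *)
Record MFunctor (C : Cat) (P : Type) (a : P -> bool) := {
  fob : (P -> Ob C) -> Ob C;
  fmor : (P -> Arr C) -> Arr C;
  fmor_dom : forall f,
    dom (fmor f) = fob (fun p => if a p then dom (f p) else cod (f p));
  fmor_cod : forall f,
    cod (fmor f) = fob (fun p => if a p then cod (f p) else dom (f p));
  fmor_id : forall S, fmor (fun p => idc (S p)) = idc (fob S);
  fmor_comp : forall f g,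
    (forall p, if a p then cod (f p) = dom (g p) else cod (g p) = dom (f p)) ->
    fmor (fun p => if a p then comp (g p) (f p) else comp (f p) (g p))
    = comp (fmor g) (fmor f) }.
Arguments MFunctor C {P} a.
Arguments fob {C P a} _ _.
Arguments fmor {C P a} _ _.

Section Defs.
Context {C : Cat}.

Definition upd {V : eqType} (A : V -> Ob C) (i : V) (X : Ob C) : V -> Ob C :=
  fun m => if m == i then X else A m.

(* The morphism family  A[fn, fp / i] s  (argument positions P, variance a,
   type s : P -> V): at a position p with s p = i it is fn if p is
   contravariant and fp if p is covariant; elsewhere it is 1_{A (s p)}. *)
Definition msub {P : Type} {V : eqType} (a : P -> bool) (s : P -> V)
  (A : V -> Ob C) (i : V) (fn fp : Arr C) : P -> Arr C :=
  fun p => if s p == i then (if a p then fp else fn) else idc (A (s p)).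

Definition is_transf {P Q : Type} {V : eqType} {a : P -> bool} {b : Q -> bool}
  (F : MFunctor C a) (G : MFunctor C b) (s : P -> V) (t : Q -> V)
  (phi : (V -> Ob C) -> Arr C) : Prop :=
  forall A : V -> Ob C,
    dom (phi A) = fob F (fun p => A (s p)) /\ cod (phi A) = fob G (fun q => A (t q)).

(* Dinaturality in the i-th variable (as in the paper): for every tuple A
   (its i-th entry being irrelevant) and f : X -> Y,
   G(A[X,f/i]t) o phi_{A[X/i]} o F(A[f,X/i]s)
     = G(A[f,Y/i]t) o phi_{A[Y/i]} o F(A[Y,f/i]s).
   Only the actions on morphisms of the functors are involved. *)
Definition dinatural {P Q : Type} {V : eqType} (a : P -> bool) (b : Q -> bool)
  (s : P -> V) (t : Q -> V)
  (Fm : (P -> Arr C) -> Arr C) (Gm : (Q -> Arr C) -> Arr C)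
  (phi : (V -> Ob C) -> Arr C) (i : V) : Prop :=
  forall (A : V -> Ob C) (X Y : Ob C) (f : Arr C), dom f = X -> cod f = Y ->
    comp (comp (Gm (msub b t A i (idc X) f)) (phi (upd A i X)))
         (Fm (msub a s A i f (idc X)))
    = comp (comp (Gm (msub b t A i f (idc Y))) (phi (upd A i Y)))
           (Fm (msub a s A i (idc Y) f)).

(* psi has variables V (the B's), phi has variables W (the A's).  The       *)
(* variables of the composite, B[A/i], are  {m : V | m != i} + W :          *)
(* inl m is B_m (m <> i) and inr w is A_w.                                  *)
Definition hvar {V : eqType} (W : eqType) (i : V) : eqType := ({m : V | m != i} + W)%type.

(* Substituting into a functor H (positions PH, variance g, type e : PH -> V)
   the functor with positions P1 into every covariant position u with e u = i
   and the functor with positions P2 into every contravariant position u with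
   e u = i. *)
Definition slot (P1 P2 : Type) (b c : bool) : Type :=
  if b then (if c then P1 else P2) else unit.

Definition spos {V : eqType} {PH : Type} (P1 P2 : Type) (g : PH -> bool) (e : PH -> V)
  (i : V) : Type := {u : PH & slot P1 P2 (e u == i) (g u)}.

(* variance of the substituted functor; the functor put in a contravariant
   slot appears as its opposite, so its variances are flipped *)
Definition svar {V : eqType} {PH P1 P2 : Type} (g : PH -> bool) (e : PH -> V)
  (i : V) (a1 : P1 -> bool) (a2 : P2 -> bool) (x : spos P1 P2 g e i) : bool :=
  let (u, y) := x in
  (match e u == i as b return slot P1 P2 b (g u) -> bool with
   | true => match g u as c return slot P1 P2 true c -> bool with
             | true => fun p => a1 p
             | false => fun q => ~~ a2 q
             end
   | false => fun _ => g u
   end) y.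

Definition stype {V W : eqType} {PH P1 P2 : Type} (g : PH -> bool) (e : PH -> V)
  (i : V) (s1 : P1 -> W) (s2 : P2 -> W) (x : spos P1 P2 g e i) : hvar W i :=
  let (u, y) := x in
  (match e u == i as b return (e u == i) = b -> slot P1 P2 b (g u) -> hvar W i with
   | true => fun _ =>
       match g u as c return slot P1 P2 true c -> hvar W i with
       | true => fun p => inr (s1 p)
       | false => fun q => inr (s2 q)
       end
   | false => fun E _ => inl (exist (fun m => m != i) (e u) (negbT E))
   end) (erefl (e u == i)) y.

(* action on morphisms of the substituted functor H[m1 / cov i, m2 / contra i]
   (the opposite of a functor has the same action on arrows) *)
Definition smor {V : eqType} {PH P1 P2 : Type} (g : PH -> bool) (e : PH -> V)
  (i : V) (Hm : (PH -> Arr C) -> Arr C)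
  (m1 : (P1 -> Arr C) -> Arr C) (m2 : (P2 -> Arr C) -> Arr C)
  (f : spos P1 P2 g e i -> Arr C) : Arr C :=
  Hm (fun u =>
    (match e u == i as b return (slot P1 P2 b (g u) -> Arr C) -> Arr C with
     | true => match g u as c return (slot P1 P2 true c -> Arr C) -> Arr C with
               | true => m1
               | false => m2
               end
     | false => fun h => h tt
     end) (fun y => f (existT _ u y))).

Definition sob {V : eqType} {PH P1 P2 : Type} (g : PH -> bool) (e : PH -> V)
  (i : V) (Ho : (PH -> Ob C) -> Ob C)
  (o1 : (P1 -> Ob C) -> Ob C) (o2 : (P2 -> Ob C) -> Ob C)
  (S : spos P1 P2 g e i -> Ob C) : Ob C :=
  Ho (fun u =>
    (match e u == i as b return (slot P1 P2 b (g u) -> Ob C) -> Ob C with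
     | true => match g u as c return (slot P1 P2 true c -> Ob C) -> Ob C with
               | true => o1
               | false => o2
               end
     | false => fun h => h tt
     end) (fun y => S (existT _ u y))).

Definition bsub {V W : eqType} {i : V} (Z : hvar W i -> Ob C) (X : Ob C) :
  V -> Ob C :=
  fun m => (match m != i as b return (m != i) = b -> Ob C with
            | true => fun E => Z (inl (exist (fun m => m != i) m E))
            | false => fun _ => X
            end) (erefl (m != i)).

Definition hcomp {PF PG PH PK : Type} {V W : eqType}
  {al : PF -> bool} {be : PG -> bool} {ga : PH -> bool} {de : PK -> bool}
  (F : MFunctor C al) (G : MFunctor C be) (H : MFunctor C ga) (K : MFunctor C de)
  (s : PF -> W) (eta : PH -> V) (th : PK -> V)
  (phi : (W -> Ob C) -> Arr C) (psi : (V -> Ob C) -> Arr C) (i : V)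
  (Z : hvar W i -> Ob C) : Arr C :=
  let A := fun w => Z (inr w) in
  let FA := fob F (fun p => A (s p)) in
  let B := bsub Z FA in
  comp (comp (fmor K (msub de th B i (idc FA) (phi A))) (psi B))
       (fmor H (msub ga eta B i (phi A) (idc FA))).

End Defs.

From mathcomp Require Import all_boot.
From Stdlib Require Import FunctionalExtensionality.

(* Write B0 for the tuple B[F(As)/i].  Whiskering the
   composite with the j-th parts of the substituted functors only touches the
   argument positions of H and K of type j, whereas phi_A lives at the
   positions of type i.  By functoriality of H and K on the product category,
   morphisms placed at the two disjoint groups of positions commute
   (interchange law), so the whiskered composite factors as
     K(i-part) o [ K(B0[X,f/j]) o psi_{B0[X/j]} o H(B0[f,X/j]) ] o H(i-part)
   (and similarly with Y on the other side), where the outer factors are the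
   same on both sides of the dinaturality equation and the brackets are the
   two sides of the dinaturality equation of psi in its j-th variable. *)

Section Substitutions.
Context {C : Cat}.

Lemma comp_id_l_at (f : Arr C) (x : Ob C) : cod f = x -> comp (idc x) f = f.
Proof. by move<-; apply: comp_id_l. Qed.

Lemma comp_id_r_at (f : Arr C) (x : Ob C) : dom f = x -> comp f (idc x) = f.
Proof. by move<-; apply: comp_id_r. Qed.

Lemma comp_idc (x : Ob C) : comp (idc x) (idc x) = idc x.
Proof. by apply: comp_id_l_at; rewrite cod_id. Qed.

Lemma comp_rebracket (a b c d e a2 a1 d2 d1 : Arr C) :
  comp a b = comp a2 a1 -> comp d e = comp d2 d1 ->
  cod e = dom d -> cod d = dom c -> cod c = dom b -> cod b = dom a ->
  cod d1 = dom d2 -> cod a1 = dom a2 -> cod c = dom a1 -> cod d2 = dom c ->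
  comp (comp a (comp (comp b c) d)) e = comp a2 (comp (comp (comp a1 c) d2) d1).
Proof.
move=> ab de ed dc cb ba d21 a12 ca1 d2c.
have dbc : dom (comp b c) = dom c by rewrite dom_comp.
have cbc : cod (comp b c) = cod b by rewrite cod_comp.
have cd21 : cod (comp d2 d1) = cod d2 by rewrite cod_comp.
have da1c : dom (comp a1 c) = dom c by rewrite dom_comp.
rewrite -(comp_assoc _ e) ?dom_comp ?cod_comp ?dbc ?cbc //.
rewrite -(comp_assoc _ e d (comp b c)) ?dbc // de.
rewrite -(comp_assoc _ (comp d2 d1) c b) ?cd21 //.
rewrite comp_assoc ?cod_comp ?cd21 // ab.
rewrite -(comp_assoc _ _ a1 a2) ?cod_comp ?cd21 //.
rewrite -(comp_assoc _ d1 d2 (comp a1 c)) ?da1c //.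
by rewrite -(comp_assoc _ (comp d2 d1) c a1) ?cd21.
Qed.

Definition composable {P : Type} (a : P -> bool) (f g : P -> Arr C) : Prop :=
  forall p, if a p then cod (f p) = dom (g p) else cod (g p) = dom (f p).

Lemma fmor_composable {P : Type} {a : P -> bool} (M : MFunctor C a)
  (f g : P -> Arr C) : composable a f g -> cod (fmor M f) = dom (fmor M g).
Proof.
move=> fg; rewrite fmor_cod fmor_dom; congr (fob M).
by apply: functional_extensionality => p; have := fg p; case: (a p).
Qed.

Lemma upd_same {V : eqType} (B : V -> Ob C) (k : V) (X : Ob C) :
  B k = X -> upd B k X = B.
Proof.
move=> BkX; apply: functional_extensionality => m.
by rewrite /upd; case: eqP => // ->.
Qed.

Lemma fmor_msub_dom {P : Type} {V : eqType} {a : P -> bool} (M : MFunctor C a)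
  (e : P -> V) (B : V -> Ob C) (k : V) (x y : Arr C) (X : Ob C) :
  dom y = X -> cod x = X -> dom (fmor M (msub a e B k x y)) = fob M (fun p => upd B k X (e p)).
Proof.
move=> yX xX; rewrite fmor_dom; congr (fob M); apply: functional_extensionality => p.
by rewrite /msub /upd; case: (e p == k); case: (a p); rewrite ?dom_id ?cod_id.
Qed.

Lemma fmor_msub_cod {P : Type} {V : eqType} {a : P -> bool} (M : MFunctor C a)
  (e : P -> V) (B : V -> Ob C) (k : V) (x y : Arr C) (X : Ob C) :
  cod y = X -> dom x = X -> cod (fmor M (msub a e B k x y)) = fob M (fun p => upd B k X (e p)).
Proof.
move=> yX xX; rewrite fmor_cod; congr (fob M); apply: functional_extensionality => p.
by rewrite /msub /upd; case: (e p == k); case: (a p); rewrite ?dom_id ?cod_id.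
Qed.

Definition msub2 {P : Type} {V : eqType} (i j : V) (a : P -> bool) (e : P -> V)
  (B : V -> Ob C) (xn xp yn yp : Arr C) : P -> Arr C :=
  fun p => if e p == i then (if a p then xp else xn)
           else if e p == j then (if a p then yp else yn) else idc (B (e p)).

Lemma msub_i_as_msub2 {P : Type} {V : eqType} (i j : V) (a : P -> bool)
  (e : P -> V) (B : V -> Ob C) (Q : Ob C) (x y : Arr C) :
  msub a e (upd B j Q) i x y = msub2 i j a e B x y (idc Q) (idc Q).
Proof.
apply: functional_extensionality => p; rewrite /msub /msub2 /upd.
case: (e p == i) => //; case: (e p == j) => //; by case: (a p).
Qed.

Lemma msub_j_as_msub2 {P : Type} {V : eqType} (i j : V) (a : P -> bool)
  (e : P -> V) (B : V -> Ob C) (x y : Arr C) : j != i ->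
  msub a e B j x y = msub2 i j a e B (idc (B i)) (idc (B i)) x y.
Proof.
move=> ji; apply: functional_extensionality => p; rewrite /msub /msub2.
by case: (eqVneq (e p) i) => [->|//]; rewrite eq_sym (negbTE ji); case: (a p).
Qed.

Section TwoVariables.
Context {P : Type} {V : eqType} (i j : V) {a : P -> bool} (M : MFunctor C a)
  (e : P -> V) (B : V -> Ob C).

Lemma msub2_composable (xn xp yn yp xn' xp' yn' yp' : Arr C) :
  cod xn' = dom xn -> cod xp = dom xp' -> cod yn' = dom yn -> cod yp = dom yp' ->
  composable a (msub2 i j a e B xn xp yn yp) (msub2 i j a e B xn' xp' yn' yp').
Proof.
move=> hxn hxp hyn hyp p; rewrite /msub2.
by case: (e p == i); case: (a p); case: (e p == j); rewrite ?cod_id ?dom_id.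
Qed.

Lemma fmor_msub2_comp (xn xp yn yp xn' xp' yn' yp' : Arr C) :
  cod xn' = dom xn -> cod xp = dom xp' -> cod yn' = dom yn -> cod yp = dom yp' ->
  comp (fmor M (msub2 i j a e B xn' xp' yn' yp')) (fmor M (msub2 i j a e B xn xp yn yp))
  = fmor M (msub2 i j a e B (comp xn xn') (comp xp' xp) (comp yn yn') (comp yp' yp)).
Proof.
move=> hxn hxp hyn hyp; rewrite -fmor_comp; last exact: msub2_composable.
congr (fmor M); apply: functional_extensionality => p; rewrite /msub2.
by case: (e p == i); case: (a p); case: (e p == j); rewrite ?comp_idc.
Qed.

Lemma fmor_msub2_swap (xn xp yn yp : Arr C) :
  comp (fmor M (msub2 i j a e B (idc (dom xn)) (idc (cod xp)) yn yp))
       (fmor M (msub2 i j a e B xn xp (idc (cod yn)) (idc (dom yp))))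
  = comp (fmor M (msub2 i j a e B xn xp (idc (dom yn)) (idc (cod yp))))
         (fmor M (msub2 i j a e B (idc (cod xn)) (idc (dom xp)) yn yp)).
Proof.
rewrite !fmor_msub2_comp ?cod_id ?dom_id //.
by rewrite !comp_id_l_at ?comp_id_r_at.
Qed.

End TwoVariables.

Lemma bsub_ne {V W : eqType} {i : V} (Z : hvar W i -> Ob C) (X : Ob C) {m : V}
  (E : m != i) : bsub Z X m = Z (inl (exist _ m E)).
Proof.
rewrite /bsub; move: (erefl (m != i)); rewrite {2 3}E => E'.
by rewrite (bool_irrelevance E' E).
Qed.

Lemma bsub_eq {V W : eqType} {i : V} (Z : hvar W i -> Ob C) (X : Ob C) :
  bsub Z X i = X.
Proof. by rewrite /bsub; move: (erefl (i != i)); rewrite {2 3}eqxx. Qed.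

Lemma bsub_upd {V W : eqType} {i j : V} (Hji : j != i) (Z : hvar W i -> Ob C)
  (X Q : Ob C) : bsub (upd Z (inl (exist _ j Hji)) Q) X = upd (bsub Z X) j Q.
Proof.
apply: functional_extensionality => m; case: (eqVneq m i) => [->|mi].
  by rewrite /upd eq_sym (negbTE Hji) !bsub_eq.
by rewrite !(bsub_ne _ _ mi) /upd (bsub_ne _ _ mi).
Qed.

Lemma smor_msub {V W : eqType} {PH P1 P2 : Type} (i j : V) (Hji : j != i)
  (g : PH -> bool) (e : PH -> V) (a1 : P1 -> bool) (a2 : P2 -> bool)
  (Hm : (PH -> Arr C) -> Arr C) (M1 : MFunctor C a1) (M2 : MFunctor C a2)
  (s1 : P1 -> W) (s2 : P2 -> W) (Z : hvar W i -> Ob C) (X0 : Ob C) (fn fp : Arr C) :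
  smor g e i Hm (fmor M1) (fmor M2)
    (msub (svar g e i a1 a2) (stype g e i s1 s2) Z (inl (exist _ j Hji)) fn fp)
  = Hm (msub2 i j g e (bsub Z X0) (idc (fob M2 (fun q => Z (inr (s2 q)))))
          (idc (fob M1 (fun p => Z (inr (s1 p))))) fn fp).
Proof.
rewrite /smor; congr Hm; apply: functional_extensionality => u.
rewrite /msub2 /msub /stype /svar /=.
pose Bu := bsub Z X0 (e u).
(* [stype] matches on the proof [erefl (e u == i)]; generalise it. *)
have gen (b : bool) (Eb : (e u == i) = b) :
  (if b as b0 return ((slot P1 P2 b0 (g u) -> Arr C) -> Arr C)
   then if g u as c return (((if c then P1 else P2) -> Arr C) -> Arr C)
        then fmor M1 else fmor M2
   else @^~ tt)
  (fun y : slot P1 P2 b (g u) =>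
    let x := (if b as b0
        return ((e u == i) = b0 -> slot P1 P2 b0 (g u) -> hvar W i)
       then fun _ => (if g u as c return ((if c then P1 else P2) -> hvar W i)
               then fun p : P1 => inr (s1 p) else fun q : P2 => inr (s2 q))
       else fun (E : (e u == i) = false) _ =>
               inl (exist (fun m : V => m != i) (e u) (negbT E))) Eb y in
    let v := (if b as b0 return (slot P1 P2 b0 (g u) -> bool)
        then if g u as c return ((if c then P1 else P2) -> bool)
             then a1 else fun q : P2 => ~~ a2 q
        else fun _ => g u) y in
    if x == inl (exist (fun x : V => x != i) j Hji)
    then (if v then fp else fn) else idc (Z x))
  = if b then (if g u then idc (fob M1 (fun p => Z (inr (s1 p))))
               else idc (fob M2 (fun q => Z (inr (s2 q)))))
    else if e u == j then (if g u then fp else fn) else idc Bu.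
  case: b Eb => Eb; first by case: (g u); rewrite -fmor_id.
  by rewrite /Bu (bsub_ne _ _ (negbT Eb)).
exact: gen.
Qed.

End Substitutions.

Section HorizontalComposite.
Context {C : Cat} {PF PG PH PK : Type} {V W : eqType}
  {al : PF -> bool} {be : PG -> bool} {ga : PH -> bool} {de : PK -> bool}
  (F : MFunctor C al) (G : MFunctor C be) (H : MFunctor C ga) (K : MFunctor C de)
  (s : PF -> W) (t : PG -> W) (eta : PH -> V) (th : PK -> V)
  (phi : (W -> Ob C) -> Arr C) (psi : (V -> Ob C) -> Arr C)
  (Hphi : is_transf F G s t phi) (Hpsi : is_transf H K eta th psi)
  (i j : V) (Hji : j != i).

Lemma hcomp_whisker_j (Z : hvar W i -> Ob C) (Q : Ob C) (kn kp hn hp : Arr C) :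
  dom kp = Q -> cod kn = Q -> cod hp = Q -> dom hn = Q ->
  comp (comp (smor de th i (fmor K) (fmor G) (fmor F)
               (msub (svar de th i be al) (stype de th i t s) Z
                  (inl (exist (fun m => m != i) j Hji)) kn kp))
             (hcomp F G H K s eta th phi psi i
                (upd Z (inl (exist (fun m => m != i) j Hji)) Q)))
       (smor ga eta i (fmor H) (fmor F) (fmor G)
               (msub (svar ga eta i al be) (stype ga eta i s t) Z
                  (inl (exist (fun m => m != i) j Hji)) hn hp))
  = comp (fmor K (msub2 i j de th (bsub Z (fob F (fun p => Z (inr (s p)))))
                   (idc (fob F (fun p => Z (inr (s p))))) (phi (fun w => Z (inr w)))
                   (idc (dom kn)) (idc (cod kp))))
      (comp (comp (comp (fmor K (msub de th (bsub Z (fob F (fun p => Z (inr (s p))))) j kn kp))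
                        (psi (upd (bsub Z (fob F (fun p => Z (inr (s p))))) j Q)))
                  (fmor H (msub ga eta (bsub Z (fob F (fun p => Z (inr (s p))))) j hn hp)))
            (fmor H (msub2 i j ga eta (bsub Z (fob F (fun p => Z (inr (s p)))))
                   (phi (fun w => Z (inr w))) (idc (fob F (fun p => Z (inr (s p)))))
                   (idc (cod hn)) (idc (dom hp))))).
Proof.
move=> kpQ knQ hpQ hnQ.
set A := fun w => Z (inr w); set FA := fob F _; set B0 := bsub Z FA.
have [dphA cphA] := Hphi A.
have B0i : B0 i = FA by exact: bsub_eq.
rewrite /hcomp -/A -/FA bsub_upd -/B0.
rewrite !(smor_msub _ _ Hji _ _ _ _ _ _ _ _ _ _ FA) -/B0.
have upd_B0 : upd (upd B0 j Q) i FA = upd B0 j Q.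
  by apply: upd_same; rewrite /upd eq_sym (negbTE Hji).
apply: comp_rebracket.
- rewrite msub_i_as_msub2 (msub_j_as_msub2 i j) // B0i.
  have := fmor_msub2_swap i j K th B0 (idc FA) (phi A) kn kp.
  by rewrite !dom_id !cod_id cphA dphA knQ kpQ.
- rewrite msub_i_as_msub2 (msub_j_as_msub2 i j) // B0i.
  have := fmor_msub2_swap i j H eta B0 (phi A) (idc FA) hn hp.
  by rewrite !dom_id !cod_id cphA dphA hnQ hpQ => ->.
- rewrite msub_i_as_msub2.
  by apply/fmor_composable/msub2_composable; rewrite ?cod_id ?dom_id ?hnQ ?hpQ.
- by rewrite (fmor_msub_cod _ _ _ _ _ _ FA) ?cod_id // upd_B0 (Hpsi _).1.
- by rewrite (fmor_msub_dom _ _ _ _ _ _ FA) ?cod_id // upd_B0 (Hpsi _).2.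
- rewrite msub_i_as_msub2.
  by apply/fmor_composable/msub2_composable; rewrite ?cod_id ?dom_id ?knQ ?kpQ.
- rewrite (msub_j_as_msub2 i j) // B0i.
  by apply/fmor_composable/msub2_composable; rewrite ?cod_id ?dom_id.
- rewrite (msub_j_as_msub2 i j) // B0i.
  by apply/fmor_composable/msub2_composable; rewrite ?cod_id ?dom_id.
- by rewrite (fmor_msub_dom _ _ _ _ _ _ Q) // (Hpsi _).2.
- by rewrite (fmor_msub_cod _ _ _ _ _ _ Q) // (Hpsi _).1.
Qed.
End HorizontalComposite.

Theorem mainTheorem9 (C : Cat) (PF PG PH PK : finType) (V W : finType)
  (al : PF -> bool) (be : PG -> bool) (ga : PH -> bool) (de : PK -> bool)
  (F : MFunctor C al) (G : MFunctor C be) (H : MFunctor C ga) (K : MFunctor C de)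
  (s : PF -> W) (t : PG -> W) (eta : PH -> V) (th : PK -> V)
  (phi : (W -> Ob C) -> Arr C) (psi : (V -> Ob C) -> Arr C)
  (Hphi : is_transf F G s t phi) (Hpsi : is_transf H K eta th psi)
  (i j : V) (Hji : j != i)
  (dpsi_i : dinatural ga de eta th (fmor H) (fmor K) psi i)
  (dpsi_j : dinatural ga de eta th (fmor H) (fmor K) psi j) :
  dinatural
    (svar ga eta i al be) (svar de th i be al)
    (stype ga eta i s t) (stype de th i t s)
    (smor ga eta i (fmor H) (fmor F) (fmor G))
    (smor de th i (fmor K) (fmor G) (fmor F))
    (hcomp F G H K s eta th phi psi i)
    (inl (exist (fun m => m != i) j Hji)).
Proof.
move=> Z X Y f fX fY.
rewrite !(hcomp_whisker_j _ _ _ _ _ _ _ _ _ _ Hphi Hpsi) ?dom_id ?cod_id //.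
by rewrite (dpsi_j _ X Y f fX fY) fX fY.
Qed.
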